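(* Let $q=2^f$ with $f\ge4$, let $q_0<q$ be a power of $2$ with $\gcd(q-1,q_0^2-1)=1$, and let $u\in\mathscr{U}_{q,q_0}$. Let $E$ be the pointwise stabilizer in $\mathrm{Aut}(\Gamma_u)$ of the vertex set $K'=\{\varepsilon\}\cup\Omega_\infty$. Then either $E$ is trivial, or $E$ is an elementary abelian $2$-group which leaves every pair $\{\Phi_{a,c},\Phi_{a,c}^{-1}\}$ ($a,c\in\mathbb{F}_q$) invariant.
   Context: For $a,c\in\mathbb{F}_q$ let $\Phi_{a,c}=\begin{bmatrix}1&0&0\\ a&1&0\\ c&a^{q_0}&1\end{bmatrix}$, $K=\{\Phi_{a,c}: a,c\in\mathbb{F}_q\}\le GL(3,\mathbb{F}_q)$ with identity $\varepsilon=\Phi_{0,0}$ and commutator subgroup $K'$; $\Omega_\infty=\{\Phi_{0,c}:c\in\mathbb{F}_q^*\}$ and for $v\in\mathbb{F}_q$, $\Omega_v=\{\Phi_{a,va^{q_0+1}}: a\in\mathbb{F}_q^*\}$. $\Gamma_u=\mathrm{Cay}(K,\Omega_u\cup\Omega_{u+1})$ is the graph with vertex set $K$, $x,y$ adjacent iff $xy^{-1}\in\Omega_u\cup\Omega_{u+1}$. $\mathscr{U}_{q,q_0}$ is the set of $u\in\mathbb{F}_q$ such that (U1) $u=(1+\eta^{q_0})/(\eta+\eta^{q_0})$ for some primitive element $\eta$ of $\mathbb{F}_q$, and (U2) $X^{q_0+1}+uX^{q_0}+(u+1)X+1$ has no roots in $\mathbb{F}_q$. *)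

From HB Require Import structures.
From mathcomp Require Import all_boot all_order all_algebra all_fingroup all_solvable all_field.
Set Implicit Arguments. Unset Strict Implicit. Unset Printing Implicit Defensive.
Import GRing.Theory.
Local Open Scope ring_scope.

Section SuzukiGraph.
Variables (F : finFieldType) (q0 : nat).

Definition Phi (a c : F) : 'M[F]_3 :=
  \matrix_(i < 3, j < 3)
    match nat_of_ord i, nat_of_ord j with
    | 0, 0 => 1 | 1, 1 => 1 | 2, 2 => 1
    | 1, 0 => a | 2, 0 => c | 2, 1 => a ^+ q0
    | _, _ => 0
    end.

Definition Kset : {set 'M[F]_3} := [set Phi a c | a : F, c : F].

Definition eps : 'M[F]_3 := Phi 0 0.

Definition Omega_inf : {set 'M[F]_3} := [set Phi 0 c | c : F & c != 0].

Definition Omega (v : F) : {set 'M[F]_3} :=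
  [set Phi a (v * a ^+ q0.+1) | a : F & a != 0].

Definition Kprime : {set 'M[F]_3} := eps |: Omega_inf.

Definition adj (u : F) (x y : 'M[F]_3) : bool :=
  x *m invmx y \in Omega u :|: Omega (u + 1).

Definition Kt := {x : 'M[F]_3 | x \in Kset}.

Definition isGraphAut (u : F) (s : {perm Kt}) : bool :=
  [forall x : Kt, forall y : Kt,
     adj u (val (s x)) (val (s y)) == adj u (val x) (val y)].

Definition Estab (u : F) : {set {perm Kt}} :=
  [set s : {perm Kt} | isGraphAut u s &&
     [forall x : Kt, (val x \in Kprime) ==> (s x == x)]].

Definition inU (u : F) : Prop :=
  (exists eta : F, (#|F|.-1).-primitive_root eta /\
     u = (1 + eta ^+ q0) / (eta + eta ^+ q0)) /\
  (forall x : F,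
     ~~ root ('X^(q0.+1) + u *: 'X^q0 + (u + 1) *: 'X + 1 : {poly F}) x).

End SuzukiGraph.

(* Every s in E fixes the central vertices Phi_{0,z}.  A non-central vertex
   Phi_{a,c} has exactly two central neighbours, Phi_{0,c+u a^(q0+1)} and
   Phi_{0,c+(u+1) a^(q0+1)}; their difference recovers a^(q0+1), hence a, since
   x |-> x^(q0+1) is a bijection when gcd(q0+1, q-1) = 1, and then c up to adding
   a^(q0+1), i.e. Phi_{a,c} up to inversion.  So s maps each vertex to itself or
   to its inverse and commutes with inversion; therefore s^2 = 1 and E is abelian.
   The second alternative thus always holds. *)

From HB Require Import structures.
From mathcomp Require Import all_boot all_order all_algebra all_fingroup all_solvable all_field.
Import GRing.Theory.
Set Implicit Arguments. Unset Strict Implicit.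
Local Open Scope ring_scope.

Section Char2.
Variable R : nzRingType.
Hypothesis pcharR : 2 \in [pchar R].

Lemma addr_eq_pchar2 (x y z : R) : (x + y == z) = (y == x + z).
Proof. by apply/eqP/eqP => [<-|->]; rewrite addKr_pchar2. Qed.

Lemma pair_eq_pchar2 (x y A B : R) : A != 0 ->
    (forall z, (z == x) || (z == x + A) = (z == y) || (z == y + B)) ->
  B = A /\ (y = x \/ y = x + A).
Proof.
move=> A_neq0 eq_pairs.
have xA_neq_x : (x + A == x) = false.
  by rewrite -[X in _ == X]addr0 (inj_eq (addrI x)) (negbTE A_neq0).
have := eq_pairs y; rewrite eqxx /= => /orP[/eqP y_x | /eqP y_xA].
  have := eq_pairs (x + A); rewrite eqxx orbT y_x xA_neq_x (inj_eq (addrI x)) /=.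
  by move/esym/eqP->; split; [| left].
have := eq_pairs x; rewrite eqxx /= y_xA [x == x + A]eq_sym xA_neq_x /= -addrA.
rewrite -[X in X == _]addr0 (inj_eq (addrI x)) eq_sym addr_eq0 (oppr_pchar2 pcharR).
by move/esym/eqP->; split; [| right].
Qed.

End Char2.

Section SuzukiMatrices.
Variables (F : finFieldType) (q0 : nat).

Lemma Phi_inj (a b c d : F) : Phi q0 a c = Phi q0 b d -> a = b /\ c = d.
Proof.
move=> E; split.
  by have := congr1 (fun M : 'M[F]_3 => M (@Ordinal 3 1 isT) (@Ordinal 3 0 isT)) E; rewrite !mxE.
by have := congr1 (fun M : 'M[F]_3 => M (@Ordinal 3 2 isT) (@Ordinal 3 0 isT)) E; rewrite !mxE.
Qed.

Lemma Phi_in_Kset (a c : F) : Phi q0 a c \in Kset F q0.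
Proof. by apply/imset2P; exists a c; rewrite ?inE. Qed.

Lemma KsetP x : x \in Kset F q0 -> exists a c, x = Phi q0 a c.
Proof. by case/imset2P => a c _ _ ->; exists a, c. Qed.

Lemma Phi0_in_Kprime (z : F) : Phi q0 0 z \in Kprime F q0.
Proof.
have [->|z_neq0] := eqVneq z 0; first by rewrite setU11.
by rewrite setU1r //; apply/imsetP; exists z; rewrite ?inE.
Qed.

Lemma Phi_in_Omega (v a c : F) :
  (Phi q0 a c \in Omega q0 v) = (a != 0) && (c == v * a ^+ q0.+1).
Proof.
apply/imsetP/andP => [[b b_neq0 eq_Phi]|[a_neq0 /eqP ->]]; last by exists a; rewrite ?inE.
by rewrite inE in b_neq0; case: (Phi_inj eq_Phi) => -> ->.
Qed.

Lemma Estab_fix (u : F) s x : s \in Estab q0 u -> val x \in Kprime F q0 -> s x = x.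
Proof. by rewrite inE => /andP[_ /forallP fixK] /(implyP (fixK x))/eqP. Qed.

Lemma group_set_Estab (u : F) : group_set (Estab q0 u).
Proof.
apply/group_setP; split.
  by rewrite inE; apply/andP; split; apply/forallP => x; [apply/forallP => y|];
    rewrite !perm1 ?eqxx ?implybT.
move=> s t; rewrite !inE => /andP[/forallP s_aut /forallP s_fix] /andP[/forallP t_aut /forallP t_fix].
apply/andP; split; apply/forallP => x; [apply/forallP => y|]; rewrite !permM.
  by rewrite (eqP (forallP (t_aut (s x)) (s y))) (eqP (forallP (s_aut x) y)).
by apply/implyP => x_fix; rewrite (eqP (implyP (s_fix x) x_fix)) (implyP (t_fix x) x_fix).
Qed.

Canonical Estab_group (u : F) := Group (group_set_Estab u).

Hypothesis q0_gt0 : (0 < q0)%N.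

Lemma mulmx_Phi_center (a c d : F) : Phi q0 a c *m Phi q0 0 d = Phi q0 a (c + d).
Proof.
apply/matrixP => i j; rewrite !mxE !big_ord_recr big_ord0 /= !mxE.
case: i => [[|[|[|i]]] Hi] //; case: j => [[|[|[|j]]] Hj] //=;
by rewrite ?expr0n ?eqn0Ngt ?q0_gt0 /= ?mul0r ?mulr0 ?mul1r ?mulr1 ?add0r ?addr0.
Qed.

Hypothesis pcharF : 2 \in [pchar F].

Lemma invmx_Phi (a c : F) : invmx (Phi q0 a c) = Phi q0 a (c + a ^+ q0.+1).
Proof.
have PhiV : Phi q0 a c *m Phi q0 a (c + a ^+ q0.+1) = 1%:M.
  apply/matrixP => i j; rewrite !mxE !big_ord_recr big_ord0 /= !mxE.
  case: i => [[|[|[|i]]] Hi] //; case: j => [[|[|[|j]]] Hj] //=;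
  rewrite ?mul0r ?mulr0 ?mul1r ?mulr1 ?add0r ?addr0 ?(addrr_pchar2 pcharF) //.
  by rewrite -exprSr addrACA !(addrr_pchar2 pcharF).
have [Phi_unit _] := mulmx1_unit PhiV.
by rewrite -[invmx _]mulmx1 -PhiV mulmxA mulVmx // mul1mx.
Qed.

Lemma invmx_Phi_center (z : F) : invmx (Phi q0 0 z) = Phi q0 0 z.
Proof. by rewrite invmx_Phi expr0n /= addr0. Qed.

Lemma adj_Phi_center (u a c z : F) :
  adj q0 u (Phi q0 a c) (Phi q0 0 z) =
  (a != 0) && ((z == c + u * a ^+ q0.+1) || (z == c + u * a ^+ q0.+1 + a ^+ q0.+1)).
Proof.
rewrite /adj invmx_Phi_center mulmx_Phi_center inE !Phi_in_Omega -andb_orr.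
by rewrite !(addr_eq_pchar2 pcharF) mulrDl mul1r addrA.
Qed.

Lemma invmx_in_Kset x : x \in Kset F q0 -> invmx x \in Kset F q0.
Proof. by case/KsetP => a [c ->]; rewrite invmx_Phi Phi_in_Kset. Qed.

Definition Kt_center (z : F) : Kt F q0 := exist _ (Phi q0 0 z) (Phi_in_Kset 0 z).

Definition Kt_inv (y : Kt F q0) : Kt F q0 := exist _ (invmx (val y)) (invmx_in_Kset (valP y)).

Lemma Kt_invK : involutive Kt_inv.
Proof. by move=> y; apply: val_inj; rewrite /= invmxK. Qed.

Hypothesis expS_inj : injective (fun x : F => x ^+ q0.+1).

Lemma adj_center_Phi_eq (u a c b e : F) : a != 0 ->
    (forall z, adj q0 u (Phi q0 b e) (Phi q0 0 z) = adj q0 u (Phi q0 a c) (Phi q0 0 z)) ->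
  Phi q0 b e = Phi q0 a c \/ Phi q0 b e = invmx (Phi q0 a c).
Proof.
move=> a_neq0 eq_adj.
have b_neq0 : b != 0.
  apply/eqP => b0; have := eq_adj (c + u * a ^+ q0.+1).
  by rewrite !adj_Phi_center b0 !eqxx a_neq0.
have := @pair_eq_pchar2 _ pcharF (c + u * a ^+ q0.+1) (e + u * b ^+ q0.+1) _ (b ^+ q0.+1) (expf_neq0 q0.+1 a_neq0).
case=> [z|/expS_inj-> [eq_e|eq_e]]; first by have := eq_adj z; rewrite !adj_Phi_center a_neq0 b_neq0.
  by left; rewrite (addIr _ eq_e).
by right; rewrite invmx_Phi (addIr _ (etrans eq_e (addrAC _ _ _))).
Qed.

Section PointwiseStabilizer.
Variable u : F.

Lemma Estab_inv_or_fix s x : s \in Estab q0 u -> s x = x \/ s x = Kt_inv x.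
Proof.
move=> sE; have := sE; rewrite inE => /andP[/forallP s_aut _].
have [a [c def_x]] := KsetP (valP x); have [b [e def_sx]] := KsetP (valP (s x)).
have [a0|a_neq0] := eqVneq a 0; first by left; rewrite (Estab_fix sE) // def_x a0 Phi0_in_Kprime.
have eq_adj z : adj q0 u (Phi q0 b e) (Phi q0 0 z) = adj q0 u (Phi q0 a c) (Phi q0 0 z).
  have fix_z : s (Kt_center z) = Kt_center z by rewrite (Estab_fix sE) ?Phi0_in_Kprime.
  by have /eqP := forallP (s_aut x) (Kt_center z); rewrite fix_z -def_x -def_sx.
by case: (adj_center_Phi_eq a_neq0 eq_adj); rewrite -def_x -def_sx => eq_sx;
  [left | right]; apply: val_inj.
Qed.

Lemma Estab_Kt_inv s y : s \in Estab q0 u -> s (Kt_inv y) = Kt_inv (s y).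
Proof.
move=> sE; have [E|E] := Estab_inv_or_fix y sE; have [E'|E'] := Estab_inv_or_fix (Kt_inv y) sE;
rewrite ?E' ?E ?Kt_invK //; apply: (@perm_inj _ s); rewrite ?E ?E' ?Kt_invK //.
Qed.

Lemma Estab_inv_pair s x : s \in Estab q0 u -> s @: [set x; Kt_inv x] = [set x; Kt_inv x].
Proof.
move=> sE; rewrite imsetU1 imset_set1 Estab_Kt_inv //.
have [->|->] := Estab_inv_or_fix x sE; rewrite ?Kt_invK //.
by apply/setP => y; rewrite !inE orbC.
Qed.

Lemma Estab_abelem : (2.-abelem (Estab q0 u))%g.
Proof.
apply/(@abelemP _ 2 (Estab_group u)) => //; split.
  apply/centsP => s sE t tE; apply/permP => x; rewrite !permM.
  have [E1|E1] := Estab_inv_or_fix x sE; have [E2|E2] := Estab_inv_or_fix x tE;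
  by rewrite ?E1 ?E2 ?(Estab_Kt_inv _ sE) ?(Estab_Kt_inv _ tE) ?E1 ?E2 ?Kt_invK.
move=> s sE; apply/permP => x; rewrite expgS expg1 permM perm1.
by have [E|E] := Estab_inv_or_fix x sE; rewrite E ?(Estab_Kt_inv _ sE) ?E ?Kt_invK.
Qed.

End PointwiseStabilizer.

End SuzukiMatrices.

Lemma expf_inj_coprime (F : finFieldType) (k : nat) :
  (0 < k)%N -> coprime k #|F|.-1 -> injective (fun x : F => x ^+ k).
Proof.
move=> k_gt0 k_coprime; have [km kn def_kkm _] := egcdnP #|F|.-1 k_gt0.
rewrite (eqP k_coprime) in def_kkm.
have expS_card j (x : F) : x ^+ (j * #|F|.-1 + 1) = x.
  elim: j => [|j IHj]; first by rewrite expr1.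
  rewrite mulSn -addnA exprD IHj -exprSr prednK ?expf_card //.
  by apply/card_gt0P; exists 0.
have expK (x : F) : (x ^+ k) ^+ km = x by rewrite -exprM mulnC def_kkm expS_card.
exact: (can_inj (g := fun y : F => y ^+ km)) expK.
Qed.

Theorem lemma8p1 (F : finFieldType) (f q0 : nat) (u : F) :
  #|F| = (2 ^ f)%N -> (4 <= f)%N ->
  (exists e : nat, q0 = (2 ^ e)%N) -> (q0 < 2 ^ f)%N ->
  coprime (2 ^ f - 1) (q0 ^ 2 - 1) ->
  inU q0 u ->
  Estab q0 u = [set 1%g] \/
  ((2.-abelem (Estab q0 u))%g /\
   forall s, s \in Estab q0 u -> forall a c : F,
     [set val (s y) | y in [set y : Kt F q0 |
        (val y == Phi q0 a c) || (val y == invmx (Phi q0 a c))]]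
     = [set Phi q0 a c; invmx (Phi q0 a c)]).
Proof.
move=> cardF _ [e def_q0] _ coprime_q _.
have pcharF : 2 \in [pchar F] by apply: (card_finPcharP cardF).
have q0_gt0 : (0 < q0)%N by rewrite def_q0 expn_gt0.
have expS_inj : injective (fun x : F => x ^+ q0.+1).
  apply: expf_inj_coprime => //; rewrite coprime_sym cardF -subn1.
  apply: coprime_dvdr coprime_q; rewrite -[in X in (_ %| X)%N](exp1n 2) subn_sqr addn1.
  exact: dvdn_mull.
right; split=> [|s sE a c]; first exact: Estab_abelem.
pose x := exist _ (Phi q0 a c) (Phi_in_Kset q0 a c) : Kt F q0.
have -> : [set y : Kt F q0 | (val y == Phi q0 a c) || (val y == invmx (Phi q0 a c))]
    = [set x; Kt_inv pcharF x] by apply/setP => y; rewrite !inE -!val_eqE.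
by rewrite imset_comp (Estab_inv_pair q0_gt0 pcharF expS_inj x sE) imsetU1 imset_set1.
Qed.
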